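(* Let $P$ be a poset, $\mathcal{U}$ a join-specification for $P$, and $S\subseteq P$. Then $\Upsilon_{\mathcal{U}}(S)$ is the smallest $\mathcal{U}$-ideal containing $S$ if and only if $\Upsilon_{\mathcal{U}}(S)$ is down-closed.
   Context: For $S\subseteq P$, $S^\downarrow=\{p\in P:p\le s\text{ for some }s\in S\}$. A join-specification for $P$ is a set $\mathcal{U}\subseteq\wp(P)$ such that $\bigvee S$ exists in $P$ for every $S\in\mathcal{U}$ and $\{p\}\in\mathcal{U}$ for every $p\in P$. A $\mathcal{U}$-ideal is a down-closed $C\subseteq P$ with $\bigvee S\in C$ whenever $S\in\mathcal{U}$, $S\subseteq C$; $\Gamma_{\mathcal{U}}(S)$ is the smallest $\mathcal{U}$-ideal containing $S$. $\mathcal{U}^+=\{S\subseteq P:\bigvee S\text{ exists and }\bigvee S\in\Gamma_{\mathcal{U}}(S)\}$, and $\Upsilon_{\mathcal{U}}(S)=\{\bigvee T:T\in\mathcal{U}^+,\ T\subseteq S^\downarrow\}$. *)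

(* posets are MathComp `porderType`s; subsets of P are
   predicates `T -> Prop` (arbitrary, possibly infinite subsets). *)
From mathcomp Require Import all_boot all_order.
Set Implicit Arguments. Unset Strict Implicit. Unset Printing Implicit Defensive.
Import Order.Theory.
Local Open Scope order_scope.

Section Defs.
Context {d : Order.disp_t} {T : porderType d}.

Definition subsetP (A B : T -> Prop) : Prop := forall x, A x -> B x.

Definition is_join (S : T -> Prop) (x : T) : Prop :=
  (forall s, S s -> s <= x) /\ (forall y, (forall s, S s -> s <= y) -> x <= y).

Definition downset (S : T -> Prop) : T -> Prop :=
  fun p => exists2 s, S s & p <= s.

Definition down_closed (C : T -> Prop) : Prop :=
  forall p q, q <= p -> C p -> C q.

Definition join_spec (U : (T -> Prop) -> Prop) : Prop :=
  (forall S, U S -> exists x, is_join S x) /\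
  (forall p : T, U (fun q => q = p)).

Definition U_ideal (U : (T -> Prop) -> Prop) (C : T -> Prop) : Prop :=
  down_closed C /\
  (forall S, U S -> subsetP S C -> forall x, is_join S x -> C x).

Definition Gamma (U : (T -> Prop) -> Prop) (S : T -> Prop) : T -> Prop :=
  fun p => forall C, U_ideal U C -> subsetP S C -> C p.

Definition Uplus (U : (T -> Prop) -> Prop) (S : T -> Prop) : Prop :=
  exists x, is_join S x /\ Gamma U S x.

Definition Upsilon (U : (T -> Prop) -> Prop) (S : T -> Prop) : T -> Prop :=
  fun x => exists A, [/\ Uplus U A, subsetP A (downset S) & is_join A x].

Definition smallest_U_ideal_containing (U : (T -> Prop) -> Prop)
  (S C : T -> Prop) : Prop :=
  [/\ U_ideal U C, subsetP S C &
      forall D, U_ideal U D -> subsetP S D -> subsetP C D].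

End Defs.

(** The inclusion of [Upsilon U S] in every [U]-ideal containing [S] and the
    inclusion of [S] in [Upsilon U S] hold unconditionally, and so does closure
    of [Upsilon U S] under [U]-joins: if each [b] in [B] is the join of some
    [A_b] below [S] with [b] in [Gamma U A_b], then the join [x] of [B] is the
    join of the whole set [downset S] cut below [x], and lies in its [Gamma]
    because [Gamma] is monotone and closed under [U]-joins. Hence down-closure
    is the only missing property of a [U]-ideal. *)
From Pilot Require Import Defs.
From mathcomp Require Import all_boot all_order.
Set Implicit Arguments.
Unset Strict Implicit.
Unset Printing Implicit Defensive.
Import Order.Theory.
Local Open Scope order_scope.

Section Upsilon.
Context {d : Order.disp_t} {T : porderType d}.
Implicit Types (U : (T -> Prop) -> Prop) (A B C S : T -> Prop) (x y b s : T).

Lemma join_unique A x y : is_join A x -> is_join A y -> x = y.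
Proof. by move=> [ux lx] [uy ly]; apply/le_anti; rewrite lx // ly. Qed.

Lemma join_le A x s : is_join A x -> A s -> s <= x.
Proof. by case=> + _; apply. Qed.

Lemma is_join1 s : is_join (fun q => q = s) s.
Proof. by split=> [q ->|y]; last apply. Qed.

Lemma Gamma_least U A C :
  U_ideal U C -> Defs.subsetP A C -> Defs.subsetP (Gamma U A) C.
Proof. by move=> iC sAC x; apply. Qed.

Lemma Gamma_mono U A B :
  Defs.subsetP A B -> Defs.subsetP (Gamma U A) (Gamma U B).
Proof. by move=> sAB x GAx C iC sBC; apply: GAx => // p /sAB /sBC. Qed.

Lemma Gamma_join U A B x :
  U B -> Defs.subsetP B (Gamma U A) -> is_join B x -> Gamma U A x.
Proof.
move=> UB sBG jx C iC sAC; case: (iC) => _ /(_ B UB); apply=> //.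
by move=> b /sBG /(_ C iC sAC).
Qed.

Lemma Uplus_join_Gamma U A x : Uplus U A -> is_join A x -> Gamma U A x.
Proof. by move=> [y [jy Gy]] jx; rewrite -(join_unique jy jx). Qed.

Lemma sub_Upsilon U S : Defs.subsetP S (Upsilon U S).
Proof.
move=> s Ss; exists (fun q => q = s); split; last exact: is_join1.
- by exists s; split; [exact: is_join1 | move=> C _; apply].
- by move=> q ->; exists s.
Qed.

Lemma Upsilon_least U S C :
  U_ideal U C -> Defs.subsetP S C -> Defs.subsetP (Upsilon U S) C.
Proof.
move=> iC sSC x [A [UA sAS jx]].
apply: Gamma_least (Uplus_join_Gamma UA jx) => //.
by case: iC => dC _ p /sAS [s Ss ps]; apply: dC ps (sSC s Ss).
Qed.

Lemma Upsilon_witness_below U S b x : Upsilon U S b -> b <= x ->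
  exists A, [/\ Defs.subsetP A (fun p => downset S p /\ p <= x),
                is_join A b & Gamma U A b].
Proof.
move=> [A [UA sAS jb]] bx; exists A; split=> //; last exact: Uplus_join_Gamma.
by move=> p Ap; split; [exact: sAS | exact: le_trans (join_le jb Ap) bx].
Qed.

Lemma Upsilon_join_closed U S B x :
  U B -> Defs.subsetP B (Upsilon U S) -> is_join B x -> Upsilon U S x.
Proof.
move=> UB sBY jx; pose Sx p := downset S p /\ p <= x.
have witness b :
  B b -> exists A, [/\ Defs.subsetP A Sx, is_join A b & Gamma U A b].
  by move=> Bb; apply: Upsilon_witness_below (sBY b Bb) (join_le jx Bb).
have jSx : is_join Sx x.
  split=> [p [] //|y ubY]; case: jx => _.
  apply=> b /witness [A [sASx [_ lb] _]].
  by apply: lb => p /sASx /ubY.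
exists Sx; split=> //; last by move=> p [].
exists x; split=> //; apply: Gamma_join UB _ jx => b /witness [A [sASx _ GAb]].
exact: Gamma_mono GAb.
Qed.

End Upsilon.

Theorem lemma3p6 (d : Order.disp_t) (T : porderType d)
  (U : (T -> Prop) -> Prop) (S : T -> Prop) :
  join_spec U ->
  (smallest_U_ideal_containing U S (Upsilon U S) <-> down_closed (Upsilon U S)).
Proof.
move=> _; split; first by case=> [[]].
move=> dY; split; last exact: Upsilon_least.
- by split=> // B UB sBY x; apply: Upsilon_join_closed.
- exact: sub_Upsilon.
Qed.
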